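(* Let $q\ge2$ and let $W$ be a $q$-ary symmetric channel on an alphabet $\mathcal{X}=\mathcal{Y}$ with $|\mathcal{X}|=q$, i.e., $W(y|x)=v$ if $y=x$ and $W(y|x)=u$ if $y\ne x$, where $u,v\in[0,1]$ and $v=1-(q-1)u$. Then $$\eta_\infty(W):=\sup_{P_0,P_1\in\Delta(\mathcal{X})}\frac{D_\infty(Q_0\|Q_1)}{D_\infty(P_0\|P_1)}=\frac{|v-u|}{\max\{u,v\}},$$ where $Q_i(y)=\sum_xP_i(x)W(y|x)$. Furthermore, this supremum is achieved in the limit by degenerate distributions (binary input pairs that both converge to the same point mass).
   Context: $\Delta(\mathcal{X})$ is the probability simplex on $\mathcal{X}$; $D_\infty(P\|Q)=\log\max_x\frac{P(x)}{Q(x)}$ is the Rényi divergence of order infinity. *)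

From HB Require Import structures.
From mathcomp Require Import all_boot all_order all_algebra.
From mathcomp Require Import all_classical all_reals all_analysis.
Set Implicit Arguments. Unset Strict Implicit. Unset Printing Implicit Defensive.
Import Order.TTheory GRing.Theory Num.Theory.
Import numFieldNormedType.Exports.
Local Open Scope classical_set_scope.
Local Open Scope ring_scope.

Section Defs.
Variables (R : realType) (X : finType).

Definition is_dist (P : X -> R) : Prop :=
  (forall x, 0 <= P x) /\ \sum_(x : X) P x = 1.

(* Renyi divergence of order infinity: log max_x P(x)/Q(x), with the
   conventions 0/0 = 0 and D = +oo if P(x) > 0 = Q(x) for some x. *)
Definition Dinf (P Q : X -> R) : \bar R :=
  if [exists x, (0 < P x) && (Q x == 0)] then +oo%E
  else (ln (\big[Num.max/0]_(x : X) (P x / Q x)))%:E.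

Definition qsc (u v : R) (x y : X) : R := if y == x then v else u.

Definition chan_out (u v : R) (P : X -> R) (y : X) : R :=
  \sum_(x : X) P x * qsc u v x y.

Definition ratio_set (u v : R) : set R :=
  [set r | exists P0 P1 : X -> R,
     [/\ is_dist P0, is_dist P1,
         (0 < Dinf P0 P1 < +oo)%E &
         Dinf (chan_out u v P0) (chan_out u v P1) = (r%:E * Dinf P0 P1)%E]].

End Defs.

From HB Require Import structures.
From mathcomp Require Import all_boot all_order all_algebra.
From mathcomp Require Import all_classical all_reals all_analysis.
From mathcomp Require Import ring lra.
Import Order.TTheory GRing.Theory Num.Theory.
Import numFieldNormedType.Exports.
Local Open Scope classical_set_scope.
Local Open Scope ring_scope.
Set Implicit Arguments. Unset Strict Implicit.

(* If P0 <= M P1 pointwise, then also 1 - P0 <= M (1 - P1).  The channel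
   output is Q(y) = min(u,v) + |v - u| w(y) with w = P when u <= v and w = 1 - P
   otherwise, so Q0 <= K Q1 with K = M / (1 + s (M - 1)), s = min(u,v)/max(u,v);
   concavity of ln gives ln K <= (1 - s) ln M, and 1 - s = |v - u| / max(u,v)
   =: eta.  Conversely, for P0 = (1 - e, e) and P1 = (1 - 2e, 2e) on two
   letters, D(P0||P1) = ln ((1 - e)/(1 - 2e)) <= e / (1 - 2e), while
   ln x >= 1 - 1/x applied to Q0(y)/Q1(y) at the letter y where w(y) = 1 - e
   gives D(Q0||Q1) >= eta e; the ratio thus lies in [eta (1 - 2e), eta]. *)

Lemma sup_eq_cvg (R : realType) (S : set R) (f : nat -> R) (l : R) :
  ubound S l -> (forall n, S (f n)) -> f n @[n --> \oo] --> l ->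
  has_sup S /\ sup S = l.
Proof.
move=> Sl Sf fl; have S_sup : has_sup S by split; [exists (f 0) | exists l].
split=> //; apply/eqP; rewrite eq_le ge_sup //=; last by exists (f 0).
rewrite -(cvg_lim _ fl) //; apply: limr_le; first by apply/cvg_ex; exists l.
by near=> n; apply: sup_upper_bound.
Unshelve. all: by end_near.
Qed.

Lemma stochastic_max_gt0 (R : realDomainType) (u v k : R) :
  0 <= u -> v = 1 - k * u -> 0 < Num.max u v.
Proof.
move=> u_ge0 v_eq; rewrite lt_max; have [u0|u_neq0] := eqVneq u 0.
  by rewrite v_eq u0 mulr0 subr0 ltr01 orbT.
by rewrite lt_def u_neq0 u_ge0.
Qed.

Section LnBounds.
Variable R : realType.
Implicit Types s x M : R.

Lemma ln_le_subr1 x : 0 < x -> ln x <= x - 1.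
Proof. by move=> x0; have := @le_ln1Dx R (x - 1); rewrite (addrC 1) subrK; apply; lra. Qed.

Lemma onemV_le_ln x : 0 < x -> 1 - x^-1 <= ln x.
Proof.
move=> x0; have := @ln_le_subr1 x^-1; rewrite invr_gt0 lnV ?posrE //; lra.
Qed.

Lemma mulr_ln_le_ln_lerp s M : 0 <= s <= 1 -> 0 < M ->
  s * ln M <= ln (1 + s * (M - 1)).
Proof.
move=> /andP[s0 s1] M0.
have := @concave_ln _ (Itv01 (eqbRL s0 erefl) s1) M 1 M0 ltr01.
rewrite !convRE /= ln1 mulr0 addr0 /unstable.onem mulr1.
by rewrite (_ : s * M + (1 - s) = 1 + s * (M - 1)) //; ring.
Qed.

End LnBounds.

Section Affine.
Variables (R : realType) (lo hi M : R).
Hypotheses (lo_ge0 : 0 <= lo) (lo_le_hi : lo <= hi) (hi_gt0 : 0 < hi) (M_ge1 : 1 <= M).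

(* The largest value of (lo + (hi - lo) a0) / (lo + (hi - lo) a1) over
   0 <= a0 <= 1, 0 <= a1, a0 <= M a1; it is attained at a0 = 1, a1 = 1 / M. *)
Definition affine_ratio_bound := M * hi / (hi + lo * (M - 1)).

Let denom_gt0 : 0 < hi + lo * (M - 1).
Proof. by rewrite ltr_wpDr // mulr_ge0 // subr_ge0. Qed.

Lemma affine_ratio_bound_ge1 : 1 <= affine_ratio_bound.
Proof.
rewrite /affine_ratio_bound ler_pdivlMr // mul1r -subr_ge0.
by rewrite (_ : _ - _ = (hi - lo) * (M - 1)) ?mulr_ge0 ?subr_ge0 //; ring.
Qed.

Lemma affine_ratio_le (a0 a1 : R) : 0 <= a0 <= 1 -> 0 <= a1 -> a0 <= M * a1 ->
  lo + (hi - lo) * a0 <= affine_ratio_bound * (lo + (hi - lo) * a1).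
Proof.
move=> /andP[a0_ge0 a0_le1] a1_ge0 a0_le.
have lo_term_ge0 : 0 <= lo * (M - 1) * (1 - a0) by rewrite !mulr_ge0 ?subr_ge0.
have hi_term_ge0 : 0 <= hi * (M * a1 - a0) by rewrite mulr_ge0 ?subr_ge0 // ltW.
rewrite /affine_ratio_bound mulrAC ler_pdivlMr // -subr_ge0.
have -> : M * hi * (lo + (hi - lo) * a1) - (lo + (hi - lo) * a0) * (hi + lo * (M - 1))
  = (hi - lo) * (lo * (M - 1) * (1 - a0) + hi * (M * a1 - a0)) by ring.
by apply: mulr_ge0; [rewrite subr_ge0 | exact: addr_ge0].
Qed.

Lemma ln_affine_ratio_bound_le : ln affine_ratio_bound <= (hi - lo) / hi * ln M.
Proof.
have M_gt0 : 0 < M by apply: lt_le_trans M_ge1.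
have s_ge0 : 0 <= lo / hi by rewrite divr_ge0 // ltW.
have s01 : 0 <= lo / hi <= 1 by rewrite s_ge0 ler_pdivrMr // mul1r.
have lerp_gt0 : 0 < 1 + lo / hi * (M - 1).
  by rewrite ltr_wpDr // mulr_ge0 // subr_ge0.
have -> : affine_ratio_bound = M / (1 + lo / hi * (M - 1)).
  by rewrite /affine_ratio_bound; field; rewrite !gt_eqF.
rewrite ln_div ?posrE // (_ : (hi - lo) / hi = 1 - lo / hi); last by field; rewrite gt_eqF.
have := mulr_ln_le_ln_lerp s01 M_gt0; lra.
Qed.

End Affine.

Section Distributions.
Variables (R : realType) (X : finType).
Implicit Types (P Q : X -> R) (K : R).

Definition max_ratio P Q : R := \big[Num.max/0]_(x : X) (P x / Q x).

Lemma is_dist_ge0 P x : is_dist P -> 0 <= P x.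
Proof. by case=> + _; apply. Qed.

Lemma sum_dist_neq P y : is_dist P -> \sum_(x | x != y) P x = 1 - P y.
Proof. by case=> _ sum1; rewrite -sum1 [in RHS](bigD1 y) //= addrAC subrr add0r. Qed.

Lemma is_dist_le1 P y : is_dist P -> P y <= 1.
Proof.
move=> dP; rewrite -subr_ge0 -(sum_dist_neq y dP).
by apply: sumr_ge0 => x _; apply: is_dist_ge0.
Qed.

Lemma dist_compl_le P Q K y : is_dist P -> is_dist Q ->
  (forall x, P x <= K * Q x) -> 1 - P y <= K * (1 - Q y).
Proof.
move=> dP dQ PQ; rewrite -(sum_dist_neq y dP) -(sum_dist_neq y dQ) mulr_sumr.
by apply: ler_sum => x _.
Qed.

Lemma le_max_ratio P Q x : P x / Q x <= max_ratio P Q.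
Proof. exact: le_bigmax. Qed.

Lemma max_ratio_le P Q K : 0 <= K -> (forall x, 0 <= Q x) ->
  (forall x, P x <= K * Q x) -> max_ratio P Q <= K.
Proof.
move=> K_ge0 Q_ge0 PQ; apply/bigmax_leP; split=> // x _.
have [->|Qx_neq0] := eqVneq (Q x) 0; first by rewrite invr0 mulr0.
by rewrite ler_pdivrMr // lt_def Qx_neq0 Q_ge0.
Qed.

Lemma ln_max_ratio_le P Q K : 1 <= K -> (forall x, 0 <= Q x) ->
  (forall x, P x <= K * Q x) -> ln (max_ratio P Q) <= ln K.
Proof.
move=> K_ge1 Q_ge0 PQ; have K_gt0 : 0 < K by apply: lt_le_trans K_ge1.
have le_K := max_ratio_le (ltW K_gt0) Q_ge0 PQ.
have [mr_le0|mr_gt0] := leP (max_ratio P Q) 0; first by rewrite ln0 // ln_ge0.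
by rewrite ler_ln.
Qed.

Lemma Dinf_dominated P Q K : (forall x, P x <= K * Q x) ->
  Dinf P Q = (ln (max_ratio P Q))%:E.
Proof.
move=> PQ; rewrite /Dinf ifF //; apply/existsPn => x.
by apply/negP => /andP[Px_gt0 /eqP Qx0]; move: (PQ x); rewrite Qx0 mulr0 leNgt Px_gt0.
Qed.

Lemma Dinf_lt_pinfty_dominated P Q : (forall x, 0 <= Q x) ->
  (Dinf P Q < +oo)%E -> forall x, P x <= max_ratio P Q * Q x.
Proof.
move=> Q_ge0; rewrite /Dinf; case: ifPn => [|/existsPn noinf _ x]; first by rewrite ltxx.
have [Qx0|Qx_neq0] := eqVneq (Q x) 0.
  by move: (noinf x); rewrite Qx0 eqxx andbT mulr0 -leNgt.
by rewrite -ler_pdivrMr ?le_max_ratio // lt_def Qx_neq0 Q_ge0.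
Qed.

Lemma onemV_le_ln_max_ratio P Q y : 0 < P y -> 0 < Q y ->
  1 - Q y / P y <= ln (max_ratio P Q).
Proof.
move=> Py_gt0 Qy_gt0; have ratio_gt0 : 0 < P y / Q y by rewrite divr_gt0.
rewrite -invf_div; apply: le_trans (onemV_le_ln ratio_gt0) _.
by rewrite ler_ln ?le_max_ratio // posrE (lt_le_trans ratio_gt0) ?le_max_ratio.
Qed.

End Distributions.

Section BinaryDist.
Variables (R : realType) (X : finType) (a b : X).
Hypothesis a_neq_b : a != b.
Implicit Type e : R.

Definition binary_dist e (x : X) : R := if x == a then 1 - e else if x == b then e else 0.

Lemma binary_dist_out e x : x != a -> x != b -> binary_dist e x = 0.
Proof. by rewrite /binary_dist => /negbTE-> /negbTE->. Qed.

Lemma binary_dist_b e : binary_dist e b = e.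
Proof. by rewrite /binary_dist eq_sym (negbTE a_neq_b) eqxx. Qed.

Lemma is_dist_binary_dist e : 0 <= e <= 1 -> is_dist (binary_dist e).
Proof.
move=> /andP[e_ge0 e_le1]; split.
  by move=> x; rewrite /binary_dist; case: ifP => _; [rewrite subr_ge0 | case: ifP].
rewrite (bigD1 a) // (bigD1 b) 1?eq_sym //= big1 => [|x /andP[xb xa]].
  by rewrite binary_dist_b /binary_dist eqxx addr0 subrK.
exact: binary_dist_out.
Qed.

Lemma is_dist_binary_dist_pair e : 0 < e -> 2 * e < 1 ->
  is_dist (binary_dist e) /\ is_dist (binary_dist (2 * e)).
Proof. by move=> e_gt0 e_lt; split; apply: is_dist_binary_dist; lra. Qed.

Lemma binary_dist_dominated e : 0 <= e -> 2 * e < 1 ->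
  forall x, binary_dist e x <= (1 - e) / (1 - 2 * e) * binary_dist (2 * e) x.
Proof.
move=> e_ge0 e_lt; have den_gt0 : 0 < 1 - 2 * e by rewrite subr_gt0.
move=> x; rewrite /binary_dist; case: ifP => _; first by rewrite divfK ?gt_eqF.
case: ifP => _; last by rewrite mulr0.
rewrite mulrAC ler_pdivlMr //; nra.
Qed.

Lemma max_ratio_binary_dist e : 0 < e -> 2 * e < 1 ->
  max_ratio (binary_dist e) (binary_dist (2 * e)) = (1 - e) / (1 - 2 * e).
Proof.
move=> e_gt0 e_lt; apply/eqP; rewrite eq_le; apply/andP; split.
  apply: max_ratio_le.
  - by rewrite divr_ge0 //; lra.
  - by move=> x; apply: is_dist_ge0; case: (is_dist_binary_dist_pair e_gt0 e_lt).
  - exact/binary_dist_dominated/e_lt/ltW.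
by have := le_max_ratio (binary_dist e) (binary_dist (2 * e)) a; rewrite /binary_dist eqxx.
Qed.

Lemma binary_max_ratio_gt1 e : 0 < e -> 2 * e < 1 -> 1 < (1 - e) / (1 - 2 * e).
Proof. by move=> e_gt0 e_lt; rewrite ltr_pdivlMr ?subr_gt0 //; lra. Qed.

Lemma Dinf_binary_dist e : 0 < e -> 2 * e < 1 ->
  Dinf (binary_dist e) (binary_dist (2 * e)) = (ln ((1 - e) / (1 - 2 * e)))%:E.
Proof.
move=> e_gt0 e_lt; rewrite -max_ratio_binary_dist //.
exact: Dinf_dominated (binary_dist_dominated (ltW e_gt0) e_lt).
Qed.

Lemma Dinf_binary_dist_fin e : 0 < e -> 2 * e < 1 ->
  (0 < Dinf (binary_dist e) (binary_dist (2 * e)) < +oo)%E.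
Proof.
move=> e_gt0 e_lt; rewrite Dinf_binary_dist // lte_fin ltry andbT.
exact/ln_gt0/binary_max_ratio_gt1.
Qed.

Lemma binary_dist_cvg (e : nat -> R) x : e n @[n --> \oo] --> 0 ->
  binary_dist (e n) x @[n --> \oo] --> ((if x == a then 1 else 0) : R).
Proof.
move=> e0; rewrite /binary_dist; case: (x == a); last by case: (x == b); [|exact: cvg_cst].
by rewrite -[X in _ --> X]subr0; apply: cvgB; [exact: cvg_cst|].
Qed.

End BinaryDist.

Section SymmetricChannel.
Variables (R : realType) (X : finType) (u v : R).
Hypotheses (u_ge0 : 0 <= u) (v_ge0 : 0 <= v) (max_gt0 : 0 < Num.max u v).
Implicit Types P : X -> R.

Let eta := `|v - u| / Num.max u v.

Lemma chan_outE P y : is_dist P -> chan_out u v P y = u + (v - u) * P y.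
Proof.
move=> dP; rewrite /chan_out (bigD1 y) //= /qsc eqxx.
rewrite (eq_bigr (fun x => P x * u)) => [|x]; last by rewrite eq_sym => /negbTE->.
by rewrite -mulr_suml sum_dist_neq //; ring.
Qed.

Definition oriented_mass P y : R := if u <= v then P y else 1 - P y.

Lemma chan_out_minmax P y : is_dist P ->
  chan_out u v P y = Num.min u v + (Num.max u v - Num.min u v) * oriented_mass P y.
Proof.
by move=> dP; rewrite chan_outE // /oriented_mass; case: lerP => uv; ring.
Qed.

Lemma max_subr_min : Num.max u v - Num.min u v = `|v - u|.
Proof. by case: lerP. Qed.

Lemma oriented_mass_in01 P y : is_dist P -> 0 <= oriented_mass P y <= 1.
Proof.
move=> dP; have := is_dist_ge0 y dP; have := is_dist_le1 y dP.
by rewrite /oriented_mass; case: ifP => _ ? ?; apply/andP; split; lra.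
Qed.

Lemma oriented_mass_dominated P0 P1 M y : is_dist P0 -> is_dist P1 ->
  (forall x, P0 x <= M * P1 x) -> oriented_mass P0 y <= M * oriented_mass P1 y.
Proof.
by move=> dP0 dP1 P01; rewrite /oriented_mass; case: ifP => _; last exact: dist_compl_le.
Qed.

Lemma chan_out_ge0 P y : is_dist P -> 0 <= chan_out u v P y.
Proof.
move=> dP; have /andP[w_ge0 _] := oriented_mass_in01 y dP.
by rewrite chan_out_minmax // max_subr_min addr_ge0 ?mulr_ge0 // le_min u_ge0.
Qed.

Lemma Dinf_chan_out_le P0 P1 M : is_dist P0 -> is_dist P1 -> 1 <= M ->
  (forall x, P0 x <= M * P1 x) ->
  Dinf (chan_out u v P0) (chan_out u v P1)
    = (ln (max_ratio (chan_out u v P0) (chan_out u v P1)))%:E /\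
  ln (max_ratio (chan_out u v P0) (chan_out u v P1)) <= eta * ln M.
Proof.
move=> dP0 dP1 M_ge1 P01.
have lo_ge0 : 0 <= Num.min u v by rewrite le_min u_ge0.
have lo_le_hi : Num.min u v <= Num.max u v by rewrite -subr_ge0 max_subr_min.
have Q01 y : chan_out u v P0 y <= affine_ratio_bound (Num.min u v) (Num.max u v) M
                                    * chan_out u v P1 y.
  rewrite !chan_out_minmax //; apply: affine_ratio_le => //.
  - exact: oriented_mass_in01.
  - by have /andP[] := oriented_mass_in01 y dP1.
  - exact: oriented_mass_dominated.
split; first exact: Dinf_dominated Q01.
apply: le_trans (ln_max_ratio_le _ _ Q01) _.
- exact: affine_ratio_bound_ge1.
- by move=> y; apply: chan_out_ge0.
- by rewrite /eta -max_subr_min; apply: ln_affine_ratio_bound_le.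
Qed.

Lemma ratio_set_ubound : ubound (ratio_set X u v) eta.
Proof.
move=> r [P0 [P1 [dP0 dP1 /andP[D_gt0 D_lt] DQ]]].
have P01 := Dinf_lt_pinfty_dominated (fun x => is_dist_ge0 x dP1) D_lt.
have DPE := Dinf_dominated P01.
have lnM_gt0 : 0 < ln (max_ratio P0 P1) by move: D_gt0; rewrite DPE lte_fin.
have M_gt1 : 1 < max_ratio P0 P1.
  by rewrite ltNge; apply/negP => /ln_le0; rewrite leNgt lnM_gt0.
have [DQE lnQ_le] := Dinf_chan_out_le dP0 dP1 (ltW M_gt1) P01.
move: DQ; rewrite DQE DPE -EFinM => -[ratio_eq].
by rewrite -(ler_pM2r lnM_gt0) -ratio_eq.
Qed.

Lemma oriented_mass_binary_dist a b e : a != b ->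
  oriented_mass (binary_dist a b e) (if u <= v then a else b) = 1 - e.
Proof.
move=> a_neq_b; rewrite /oriented_mass; case: (u <= v) => /=; last by rewrite binary_dist_b.
by rewrite /binary_dist eqxx.
Qed.

Section BinaryInputs.
Variables (a b : X) (e : R).
Hypotheses (a_neq_b : a != b) (e_gt0 : 0 < e) (e_lt : 2 * e < 1).

Let P0 := binary_dist a b e.
Let P1 := binary_dist a b (2 * e).
Let Q0 := chan_out u v P0.
Let Q1 := chan_out u v P1.

Let is_dist_P0 : is_dist P0.
Proof. by case: (is_dist_binary_dist_pair a_neq_b e_gt0 e_lt). Qed.

Let is_dist_P1 : is_dist P1.
Proof. by case: (is_dist_binary_dist_pair a_neq_b e_gt0 e_lt). Qed.

Let M_gt1 : 1 < (1 - e) / (1 - 2 * e).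
Proof. exact: binary_max_ratio_gt1. Qed.

Lemma ln_max_ratio_chan_out_binary_ge : eta * e <= ln (max_ratio Q0 Q1).
Proof.
pose y := if u <= v then a else b.
have Q_at_y e' : is_dist (binary_dist a b e') ->
    chan_out u v (binary_dist a b e') y = Num.max u v - `|v - u| * e'.
  move=> dP; rewrite chan_out_minmax // oriented_mass_binary_dist // -max_subr_min.
  by ring.
have d_le_hi : `|v - u| <= Num.max u v by rewrite -max_subr_min gerBl le_min u_ge0.
have Q1y_gt0 : 0 < Num.max u v - `|v - u| * (2 * e).
  have : 0 < Num.max u v * (1 - 2 * e) by rewrite mulr_gt0 // subr_gt0.
  have : `|v - u| * (2 * e) <= Num.max u v * (2 * e).
    by rewrite ler_wpM2r // mulr_ge0 // ltW.
  lra.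
have Q0y_gt0 : 0 < Num.max u v - `|v - u| * e.
  by apply: lt_le_trans Q1y_gt0 _; rewrite lerB // ler_wpM2l // ler_peMl ?ler1n // ltW.
apply: le_trans (onemV_le_ln_max_ratio (y := y) _ _); rewrite /Q0 /Q1 ?Q_at_y //.
rewrite -subr_ge0 (_ : _ - _ = (`|v - u| * e) ^+ 2 / (Num.max u v * (Num.max u v - `|v - u| * e))).
  by rewrite divr_ge0 ?sqr_ge0 // mulr_ge0 // ltW.
by rewrite /eta; field; rewrite !gt_eqF.
Qed.

Definition binary_ratio : R := ln (max_ratio Q0 Q1) / ln ((1 - e) / (1 - 2 * e)).

Lemma Dinf_chan_out_binary_dist : Dinf Q0 Q1 = (binary_ratio%:E * Dinf P0 P1)%E.
Proof.
have [DQE _] := Dinf_chan_out_le is_dist_P0 is_dist_P1 (ltW M_gt1)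
  (binary_dist_dominated a b (ltW e_gt0) e_lt).
rewrite DQE Dinf_binary_dist // -EFinM /binary_ratio divfK // gt_eqF //.
exact: ln_gt0.
Qed.

Lemma binary_ratio_ge : eta * (1 - 2 * e) <= binary_ratio.
Proof.
have lnM_gt0 := ln_gt0 M_gt1.
have lnM_le : (1 - 2 * e) * ln ((1 - e) / (1 - 2 * e)) <= e.
  have den_gt0 : 0 < 1 - 2 * e by rewrite subr_gt0.
  rewrite -[leRHS](_ : (1 - 2 * e) * ((1 - e) / (1 - 2 * e) - 1) = e).
    by apply: ler_wpM2l; [exact: ltW | exact/ln_le_subr1/(lt_trans ltr01)].
  by field; rewrite gt_eqF.
rewrite /binary_ratio ler_pdivlMr // -mulrA.
apply: le_trans ln_max_ratio_chan_out_binary_ge.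
by rewrite ler_wpM2l // divr_ge0 // ltW.
Qed.

Lemma binary_ratio_in_ratio_set : ratio_set X u v binary_ratio.
Proof.
exists P0, P1; split=> //; first exact: Dinf_binary_dist_fin.
exact: Dinf_chan_out_binary_dist.
Qed.

End BinaryInputs.

Lemma binary_ratio_cvg a b (e : nat -> R) : a != b ->
  (forall n, 0 < e n /\ 2 * e n < 1) -> e n @[n --> \oo] --> 0 ->
  binary_ratio a b (e n) @[n --> \oo] --> eta.
Proof.
move=> a_neq_b e_small e_cvg.
apply: (@squeeze_cvgr _ _ _ _ (fun n => eta * (1 - 2 * e n)) (fun=> eta)); last exact: cvg_cst.
  near=> n; have [e_gt0 e_lt] := e_small n; rewrite binary_ratio_ge //=.
  exact/ratio_set_ubound/binary_ratio_in_ratio_set.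
rewrite -[X in _ --> X]mulr1 -[X in _ * X]subr0 -[X in _ - X](mulr0 2).
by apply: cvgMr; apply: cvgB; [exact: cvg_cst | exact: cvgMr].
Unshelve. all: by end_near.
Qed.

End SymmetricChannel.

Theorem theorem4p5 (R : realType) (X : finType) (u v : R) :
  (2 <= #|X|)%N ->
  0 <= u <= 1 -> 0 <= v <= 1 -> v = 1 - (#|X|.-1)%:R * u ->
  let eta := `|v - u| / Num.max u v in
  [/\ has_sup (ratio_set X u v), sup (ratio_set X u v) = eta &
      exists (a b : X) (P0 P1 : nat -> X -> R) (r : nat -> R),
        [/\ a != b,
            (forall n, [/\ is_dist (P0 n), is_dist (P1 n),
                (forall x, x != a -> x != b -> P0 n x = 0 /\ P1 n x = 0),
                (0 < Dinf (P0 n) (P1 n) < +oo)%E &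
                Dinf (chan_out u v (P0 n)) (chan_out u v (P1 n))
                  = ((r n)%:E * Dinf (P0 n) (P1 n))%E]),
            (forall x, P0 n x @[n --> \oo] --> ((if x == a then 1 else 0) : R)),
            (forall x, P1 n x @[n --> \oo] --> ((if x == a then 1 else 0) : R)) &
            r n @[n --> \oo] --> eta]].
Proof.
move=> card_ge2 /andP[u_ge0 _] /andP[v_ge0 _] v_eq eta.
have max_gt0 := stochastic_max_gt0 u_ge0 v_eq.
have /card_gt1P[a [b [_ _ a_neq_b]]] := card_ge2.
pose e n : R := harmonic (n + 2)%N.
have e_small n : 0 < e n /\ 2 * e n < 1.
  by split; [exact: harmonic_gt0 | rewrite /e /= ltr_pdivrMr // mul1r ltr_nat addn2].
have e_cvg : e n @[n --> \oo] --> 0 by have := @cvg_harmonic R; rewrite -(cvg_shiftn 2).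
pose r n := binary_ratio u v a b (e n).
have r_cvg : r n @[n --> \oo] --> eta := binary_ratio_cvg u_ge0 v_ge0 max_gt0 a_neq_b e_small e_cvg.
have r_in n : ratio_set X u v (r n).
  by have [e_gt0 e_lt] := e_small n; exact: binary_ratio_in_ratio_set.
have [ratio_has_sup ratio_supE] := sup_eq_cvg (ratio_set_ubound u_ge0 v_ge0 max_gt0) r_in r_cvg.
split=> //; exists a, b, (fun n => binary_dist a b (e n)), (fun n => binary_dist a b (2 * e n)), r.
split=> //.
- move=> n; have [e_gt0 e_lt] := e_small n.
  have [dP0 dP1] := is_dist_binary_dist_pair a_neq_b e_gt0 e_lt.
  split=> //; first by move=> x xa xb; rewrite !binary_dist_out.
    exact: Dinf_binary_dist_fin.
  exact: Dinf_chan_out_binary_dist.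
- by move=> x; apply: binary_dist_cvg.
- by move=> x; apply: binary_dist_cvg; rewrite -(mulr0 2); apply: cvgMr.
Qed.
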